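(* Let $\Bbbk$ be an algebraically closed field of characteristic $0$, let $\mathfrak q$ be a finite-dimensional Lie algebra over $\Bbbk$, and let $\vartheta\in\mathrm{Aut}(\mathfrak q)$ be an automorphism of finite order $m\ge 1$ with fixed-point subalgebra $\mathfrak q_0=\mathfrak q^\vartheta$. Let $n\ge 1$, $\mathfrak r=\mathfrak q^{\oplus n}$, and let $\tilde\vartheta\in\mathrm{Aut}(\mathfrak r)$ be defined by $\tilde\vartheta(y_1,y_2,\ldots,y_n)=(y_n,\vartheta(y_1),y_2,\ldots,y_{n-1})$. Suppose that $\mathfrak q_0^*\cap\mathfrak q^*_{\mathsf{reg}}\neq\varnothing$. Then $\mathfrak r_0^*\cap\mathfrak r^*_{\mathsf{reg}}\neq\varnothing$.
   Context: Fix a primitive $m$-th root of unity $\zeta$; $\mathfrak q_i$ ($i=0,\dots,m-1$) is the $\zeta^i$-eigenspace of $\vartheta$, so $\mathfrak q=\bigoplus_i\mathfrak q_i$. The space $\mathfrak q_0^*$ is identified with the annihilator of $\bigoplus_{i=1}^{m-1}\mathfrak q_i$ in $\mathfrak q^*$. Similarly $\mathfrak r_0=\mathfrak r^{\tilde\vartheta}$ and $\mathfrak r_0^*$ denotes the annihilator in $\mathfrak r^*$ of the sum of all eigenspaces of $\tilde\vartheta$ with eigenvalue $\neq 1$. For a finite-dimensional Lie algebra $\mathfrak a$ and $\xi\in\mathfrak a^*$, $\mathfrak a^\xi=\{x\in\mathfrak a: \mathrm{ad}^*(x)\xi=0\}$; the index is $\mathrm{ind}\,\mathfrak a=\min_{\xi\in\mathfrak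 a^*}\dim\mathfrak a^\xi$, and $\mathfrak a^*_{\mathsf{reg}}=\{\xi\in\mathfrak a^*:\dim\mathfrak a^\xi=\mathrm{ind}\,\mathfrak a\}$. *)

From HB Require Import structures.
From mathcomp Require Import all_boot all_order all_algebra vector.
Set Implicit Arguments. Unset Strict Implicit. Unset Printing Implicit Defensive.
Import GRing.Theory.
Local Open Scope ring_scope.

Definition is_lie_bracket (K : fieldType) (V : vectType K) (br : V -> V -> V) : Prop :=
  [/\ (forall (a : K) (x y z : V), br (a *: x + y) z = a *: br x z + br y z),
      (forall (a : K) (x y z : V), br z (a *: x + y) = a *: br z x + br z y),
      (forall x : V, br x x = 0) &
      (forall x y z : V, br x (br y z) + br y (br z x) + br z (br x y) = 0)].

Definition is_lie_aut (K : fieldType) (V : vectType K) (br : V -> V -> V)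
    (th : 'End(V)) : Prop :=
  (lker th == 0)%VS /\ forall x y : V, th (br x y) = br (th x) (th y).

Definition has_order (K : fieldType) (V : vectType K) (th : 'End(V)) (m : nat) : Prop :=
  [/\ (0 < m)%N,
      (forall x : V, iter m th x = x) &
      (forall k : nat, (0 < k < m)%N -> exists x : V, iter k th x != x)].


Definition stab (K : fieldType) (V : vectType K) (br : V -> V -> V)
    (xi : 'Hom(V, K^o)) : {vspace V} :=
  lker (linfun (fun x : V => linfun (fun y : V => (xi (br x y) : K^o)))).

Definition dual_reg (K : fieldType) (V : vectType K) (br : V -> V -> V)
    (xi : 'Hom(V, K^o)) : Prop :=
  forall eta : 'Hom(V, K^o), (\dim (stab br xi) <= \dim (stab br eta))%N.

(* q_0^*: the annihilator of the sum of the eigenspaces q_i = ker(th - zeta^i),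
   i = 1, ..., m-1 (zeta a primitive m-th root of unity). *)
Definition in_q0_dual (K : fieldType) (V : vectType K) (th : 'End(V)) (m : nat)
    (zeta : K) (xi : 'Hom(V, K^o)) : Prop :=
  forall i : nat, (0 < i < m)%N ->
    forall x : V, x \in passmx.leigenspace th (zeta ^+ i) -> xi x = 0.

(* r_0^*: annihilator of the sum of all eigenspaces of th with eigenvalue != 1. *)
Definition in_fixed_dual (K : fieldType) (V : vectType K) (th : 'End(V))
    (xi : 'Hom(V, K^o)) : Prop :=
  forall a : K, a != 1 -> forall x : V, x \in passmx.leigenspace th a -> xi x = 0.

(* r = q^{(+) n.+1}, realised as finite functions 'I_n.+1 -> V. *)
Definition sum_bracket (K : fieldType) (V : vectType K) (br : V -> V -> V) (n : nat)
    (y z : {ffun 'I_n.+1 -> V}) : {ffun 'I_n.+1 -> V} :=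
  [ffun j => br (y j) (z j)].

(* tilde theta (y_1, ..., y_N) = (y_N, th y_1, y_2, ..., y_{N-1}), N = n.+1;
   0-indexed: component j is y_{j-1 mod N}, with th applied iff j = 1 mod N
   (for N = 1 this is just th). *)
Definition cyc_aut_fun (K : fieldType) (V : vectType K) (th : 'End(V)) (n : nat)
    (y : {ffun 'I_n.+1 -> V}) : {ffun 'I_n.+1 -> V} :=
  [ffun j : 'I_n.+1 =>
     if val j == (1 %% n.+1)%N then th (y (ord_pred j)) else y (ord_pred j)].

Definition cyc_aut (K : fieldType) (V : vectType K) (th : 'End(V)) (n : nat)
  : 'End({ffun 'I_n.+1 -> V}) := linfun (cyc_aut_fun th (n:=n)).

From HB Require Import structures.
From mathcomp Require Import all_boot all_order all_algebra vector.
Set Implicit Arguments. Unset Strict Implicit. Unset Printing Implicit Defensive.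
Import GRing.Theory.
Local Open Scope ring_scope.

(* Take Xi (y_1, ..., y_N) := xi y_1 + ... + xi y_N for xi regular in q_0^*.
   The stabiliser of Xi lies in the direct sum of N copies of q^xi, while for
   any eta the stabiliser r^eta contains the direct sum of the stabilisers of
   the restrictions of eta to the N factors; so regularity of xi gives that of
   Xi.  Moreover xi is theta-invariant: the discrete Fourier components
   (1/m) sum_k zeta^(ik) theta^k x of any x are theta-eigenvectors summing to
   x, and xi kills those with eigenvalue <> 1.  Hence Xi is invariant under
   tilde-theta, and an invariant functional vanishes on every eigenspace with
   eigenvalue <> 1. *)

Lemma linfun_linearE (K : fieldType) (aT rT : vectType K) (f : aT -> rT) :
  linear f -> linfun f =1 f.
Proof.
move=> f_lin.
pose F : {linear aT -> rT} := HB.pack f (GRing.isLinear.Build K aT rT *:%R f f_lin).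
exact: (lfunE F).
Qed.

Lemma leigenspaceP (K : fieldType) (V : vectType K) (f : 'End(V)) a x :
  reflect (f x = a *: x) (x \in passmx.leigenspace f a).
Proof. by rewrite memv_ker !lfun_simp /= subr_eq0; apply: eqP. Qed.

Lemma invariant_fixed_dual (K : fieldType) (V : vectType K) (f : 'End(V))
    (xi : 'Hom(V, K^o)) :
  (forall x, xi (f x) = xi x) -> in_fixed_dual f xi.
Proof.
move=> xi_inv a a_neq1 x /leigenspaceP fx; have /eqP := xi_inv x.
rewrite fx linearZ /= -subr_eq0 -{2}(mul1r (xi x)) -mulrBl mulf_eq0 subr_eq0.
by rewrite (negPf a_neq1) => /eqP.
Qed.

Section Stabiliser.
Variables (K : fieldType) (V : vectType K) (br : V -> V -> V).
Hypothesis br_linl :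
  forall (a : K) (x y z : V), br (a *: x + y) z = a *: br x z + br y z.
Hypothesis br_linr :
  forall (a : K) (x y z : V), br z (a *: x + y) = a *: br z x + br z y.

Lemma br0l z : br 0 z = 0.
Proof.
have /eqP := br_linl 1 0 0 z.
by rewrite !scale1r addr0 -subr_eq subrr eq_sym => /eqP.
Qed.

Lemma br0r z : br z 0 = 0.
Proof.
have /eqP := br_linr 1 0 0 z.
by rewrite !scale1r addr0 -subr_eq subrr eq_sym => /eqP.
Qed.

Lemma stabP (xi : 'Hom(V, K^o)) v :
  reflect (forall y, xi (br v y) = 0) (v \in stab br xi).
Proof.
have lin_r x : linear (fun y : V => (xi (br x y) : K^o)).
  by move=> a y z; rewrite br_linr linearP.
have lin_l : linear (fun x => linfun (fun y : V => (xi (br x y) : K^o))).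
  move=> a x y; apply/lfunP => z.
  by rewrite !lfun_simp /= !linfun_linearE // br_linl linearP.
rewrite /stab memv_ker linfun_linearE //; apply: (iffP eqP) => [/lfunP h y|h].
  by have := h y; rewrite linfun_linearE // zero_lfunE.
by apply/lfunP => y; rewrite linfun_linearE // zero_lfunE.
Qed.

End Stabiliser.

Lemma sum_expr_eq0 (R : idomainType) (z : R) m :
  z ^+ m = 1 -> z != 1 -> \sum_(i < m) z ^+ i = 0.
Proof.
move=> zm z_neq1; have /eqP := subrX1 z m.
by rewrite zm subrr eq_sym mulf_eq0 subr_eq0 (negPf z_neq1) => /eqP.
Qed.

Lemma sum_prim_root_expr (R : idomainType) (z : R) m k :
  m.-primitive_root z ->
  \sum_(i < m) z ^+ (i * k) = if (m %| k)%N then m%:R else 0.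
Proof.
move=> z_prim; under eq_bigr => i _ do rewrite mulnC exprM.
case: ifP => [m_dvd_k|m_ndvd_k].
  rewrite (prim_order_dvd z_prim) in m_dvd_k.
  under eq_bigr => i _ do rewrite (eqP m_dvd_k) expr1n.
  by rewrite sumr_const card_ord.
apply: sum_expr_eq0; last by rewrite -(prim_order_dvd z_prim) m_ndvd_k.
by rewrite -exprM mulnC exprM (prim_expr_order z_prim) expr1n.
Qed.

Lemma sum_shift_periodic (M : zmodType) (g : nat -> M) m :
  g m = g 0%N -> \sum_(k < m) g k.+1 = \sum_(k < m) g k.
Proof.
move=> g_per; apply: (@addrI _ (g 0%N)).
have : \sum_(0 <= k < m.+1) g k = \sum_(0 <= k < m.+1) g k by [].
by rewrite {1}big_nat_recl // big_nat_recr //= g_per [RHS]addrC !big_mkord.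
Qed.

Section Fourier.
Variables (K : fieldType) (V : vectType K) (th : 'End(V)) (m : nat) (zeta : K).
Hypothesis zeta_prim : m.-primitive_root zeta.
Hypothesis th_order : forall x, iter m th x = x.

Definition fourier_sum (i : nat) (x : V) : V :=
  \sum_(k < m) zeta ^+ (i * k) *: iter k th x.

Definition fourier_comp (i : nat) (x : V) : V := m%:R^-1 *: fourier_sum i x.

Lemma fourier_sum_eigen i x : zeta ^+ i *: th (fourier_sum i x) = fourier_sum i x.
Proof.
pose g k := zeta ^+ (i * k) *: iter k th x.
rewrite /fourier_sum -[RHS](@sum_shift_periodic _ g); last first.
  by rewrite /g th_order muln0 mulnC exprM (prim_expr_order zeta_prim) expr1n.
rewrite linear_sum scaler_sumr; apply: eq_bigr => k _.
by rewrite linearZ scalerA -exprD -mulnS.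
Qed.

Lemma fourier_comp_eigen i x :
  (i <= m)%N -> th (fourier_comp i x) = zeta ^+ (m - i) *: fourier_comp i x.
Proof.
move=> le_im; rewrite /fourier_comp -[in RHS](fourier_sum_eigen i x) linearZ /=.
by rewrite !scalerA mulrAC -exprD subnK // (prim_expr_order zeta_prim) mul1r.
Qed.

Lemma sum_fourier_comp x : \sum_(i < m) fourier_comp i x = x.
Proof.
rewrite /fourier_comp /fourier_sum -scaler_sumr exchange_big /=.
under eq_bigr => k _ do rewrite -scaler_suml (sum_prim_root_expr _ zeta_prim).
have m_gt0 := prim_order_gt0 zeta_prim.
rewrite (bigD1 (Ordinal m_gt0)) //= big1 ?addr0 => [|k k_neq0].
  by rewrite dvdn0 scalerA mulVf ?scale1r ?(prim_root_natf_neq0 zeta_prim).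
rewrite gtnNdvd ?scale0r // lt0n.
by apply: contra k_neq0 => /eqP k0; apply/eqP/val_inj.
Qed.

Lemma q0_dual_invariant (xi : 'Hom(V, K^o)) :
  in_q0_dual th m zeta xi -> forall x, xi (th x) = xi x.
Proof.
move=> xi_q0 x; rewrite -(sum_fourier_comp x) linear_sum /= !linear_sum /=.
apply: eq_bigr => -[i /= lt_im] _.
rewrite fourier_comp_eigen ?(ltnW lt_im) // linearZ /=.
have [->|i_gt0] := posnP i; first by rewrite subn0 (prim_expr_order zeta_prim) scale1r.
have comp0 : xi (fourier_comp i x) = 0.
  apply: (xi_q0 (m - i)%N).
    by rewrite subn_gt0 lt_im ltn_subrL i_gt0 (ltn_trans i_gt0 lt_im).
  by apply/leigenspaceP; rewrite fourier_comp_eigen ?(ltnW lt_im).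
by rewrite comp0 scaler0.
Qed.

End Fourier.

Section DirectSum.
Variables (K : fieldType) (V : vectType K) (n : nat).
Local Notation R := {ffun 'I_n.+1 -> V}.

Definition embed (j : 'I_n.+1) : 'Hom(V, R) :=
  linfun (fun v : V => [ffun k => if k == j then v else 0] : R).

Lemma embedE j v k : embed j v k = if k == j then v else 0.
Proof.
rewrite linfun_linearE ?ffunE // => a x y; apply/ffunP => i; rewrite !ffunE.
by case: ifP => _; rewrite ?scaler0 ?addr0.
Qed.

Lemma embed_inj j : injective (embed j).
Proof. by move=> x y /ffunP /(_ j); rewrite !embedE eqxx. Qed.

Lemma ffun_sum_embed (y : R) : y = \sum_j embed j (y j).
Proof.
apply/ffunP => k; rewrite sum_ffunE (bigD1 k) //= big1 ?addr0.
  by rewrite embedE eqxx.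
by move=> j /negPf k_neq_j; rewrite embedE eq_sym k_neq_j.
Qed.

Lemma directv_sum_embed (Us : 'I_n.+1 -> {vspace V}) :
  directv (\sum_j embed j @: Us j).
Proof.
apply/directv_sum_independent => us us_in sum0 i _.
have us_out j k : k != j -> us j k = 0.
  by case/memv_imgP: (us_in j isT) => u _ -> /negPf k_neq_j; rewrite embedE k_neq_j.
apply/ffunP => k; rewrite ffunE; have [->|/us_out//] := eqVneq k i.
have := congr1 (fun y : R => y i) sum0; rewrite /= sum_ffunE ffunE (bigD1 i) //=.
by rewrite big1 ?addr0 // => j j_neq_i; apply: us_out; rewrite eq_sym.
Qed.

Lemma dim_sum_embed (Us : 'I_n.+1 -> {vspace V}) :
  \dim (\sum_j embed j @: Us j) = \sum_j \dim (Us j).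
Proof.
move/directvP: (directv_sum_embed Us) => /= ->; apply: eq_bigr => j _.
by apply: limg_dim_eq; have /lker0P/eqP -> := @embed_inj j; rewrite capv0.
Qed.

Definition dual_diag (xi : 'Hom(V, K^o)) : 'Hom(R, K^o) :=
  linfun (fun y : R => \sum_j (xi (y j) : K^o)).

Lemma dual_diagE xi y : dual_diag xi y = \sum_j xi (y j).
Proof.
rewrite linfun_linearE // => a x z; rewrite scaler_sumr -big_split /=.
by apply: eq_bigr => j _; rewrite !ffunE linearP.
Qed.

Lemma dual_diag_cyc_aut (th : 'End(V)) (xi : 'Hom(V, K^o)) :
  (forall x, xi (th x) = xi x) ->
  forall y, dual_diag xi (cyc_aut th n y) = dual_diag xi y.
Proof.
move=> xi_inv y; have cyc_lin : linear (@cyc_aut_fun K V th n).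
  by move=> a x z; apply/ffunP => j; rewrite !ffunE; case: ifP; rewrite ?linearP.
rewrite !dual_diagE [RHS](reindex_inj (@ord_pred_inj _)) /=.
apply: eq_bigr => j _; rewrite (linfun_linearE cyc_lin) ffunE.
by case: ifP; rewrite ?xi_inv.
Qed.

Section Bracket.
Variable br : V -> V -> V.
Hypothesis br_linl :
  forall (a : K) (x y z : V), br (a *: x + y) z = a *: br x z + br y z.
Hypothesis br_linr :
  forall (a : K) (x y z : V), br z (a *: x + y) = a *: br z x + br z y.

Local Notation sbr := (sum_bracket br (n:=n)).

Lemma sum_bracket_linl a (x y z : R) : sbr (a *: x + y) z = a *: sbr x z + sbr y z.
Proof. by apply/ffunP => k; rewrite !ffunE br_linl. Qed.

Lemma sum_bracket_linr a (x y z : R) : sbr z (a *: x + y) = a *: sbr z x + sbr z y.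
Proof. by apply/ffunP => k; rewrite !ffunE br_linr. Qed.

Lemma sum_bracket_embed j v w : sbr (embed j v) w = embed j (br v (w j)).
Proof.
apply/ffunP => k; rewrite !ffunE !embedE.
by case: eqP => [->|_]; rewrite ?br0l.
Qed.

Local Notation br_stabP := (stabP br_linl br_linr).
Local Notation sbr_stabP := (stabP sum_bracket_linl sum_bracket_linr).

Lemma stab_dual_diag_sub xi :
  (stab sbr (dual_diag xi) <= \sum_j embed j @: stab br xi)%VS.
Proof.
apply/subvP => y /sbr_stabP y_stab; rewrite [y]ffun_sum_embed.
apply: memv_sumr => j _; apply/memv_img/br_stabP => z.
have := y_stab (embed j z); rewrite dual_diagE (bigD1 j) //= big1 ?addr0.
  by rewrite ffunE embedE eqxx.
by move=> k /negPf k_neq_j; rewrite ffunE embedE k_neq_j br0r // linear0.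
Qed.

Lemma stab_restrict_sub eta :
  (\sum_j embed j @: stab br (eta \o embed j)%VF <= stab sbr eta)%VS.
Proof.
apply/subv_sumP => j _; apply/subvP => _ /memv_imgP[v /br_stabP v_stab ->].
by apply/sbr_stabP => w; rewrite sum_bracket_embed -comp_lfunE v_stab.
Qed.

Lemma dual_reg_diag xi : dual_reg br xi -> dual_reg sbr (dual_diag xi).
Proof.
move=> xi_reg eta.
rewrite (leq_trans (dimvS (stab_dual_diag_sub xi))) // dim_sum_embed.
rewrite (leq_trans _ (dimvS (stab_restrict_sub eta))) // dim_sum_embed.
by apply: leq_sum => j _; apply: xi_reg.
Qed.

End Bracket.
End DirectSum.

Theorem lemma2p1 (K : closedFieldType) (hK : [pchar K] =i pred0)
    (V : vectType K) (br : V -> V -> V) (hbr : is_lie_bracket br)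
    (th : 'End(V)) (hth : is_lie_aut br th) (m : nat) (hm : has_order th m)
    (zeta : K) (hzeta : m.-primitive_root zeta) (n : nat)
    (hq : exists xi : 'Hom(V, K^o), in_q0_dual th m zeta xi /\ dual_reg br xi) :
  exists xi : 'Hom({ffun 'I_n.+1 -> V}, K^o),
    in_fixed_dual (cyc_aut th n) xi /\ dual_reg (sum_bracket br (n:=n)) xi.
Proof.
have [xi [xi_q0 xi_reg]] := hq.
have [br_linl br_linr _ _] := hbr.
have [_ th_order _] := hm.
exists (dual_diag n xi); split; last exact: dual_reg_diag.
apply: invariant_fixed_dual; apply: dual_diag_cyc_aut.
exact: q0_dual_invariant xi_q0.
Qed.
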